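(* Let $H$ be a separable complex Hilbert space and $T:H\to H$ a hyponormal operator, i.e. $\|T^*h\|\le\|Th\|$ for every $h\in H$. If $T$ is recurrent, then $T$ is unitary.
   Context: $T$ is recurrent if for every non-empty open $U\subset H$ there is a positive integer $k$ with $U\cap T^{-k}(U)\neq\emptyset$. *)

From HB Require Import structures.
From mathcomp Require Import all_boot all_order all_algebra.
From mathcomp Require Import reals.
From mathcomp.real_closed Require Import complex.
Set Implicit Arguments. Unset Strict Implicit. Unset Printing Implicit Defensive.
Import Order.TTheory GRing.Theory Num.Theory.
Local Open Scope ring_scope.

Definition inner_product (R : realType) (V : lmodType R[i]) (ip : V -> V -> R[i]) : Prop :=
  [/\ (forall (a : R[i]) (x y z : V), ip (a *: x + y) z = a * ip x z + ip y z),
      (forall x y : V, ip y x = conjc (ip x y)),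
      (forall x : V, 0 <= ip x x)
    & (forall x : V, ip x x = 0 -> x = 0)].

Definition hnorm (R : realType) (V : lmodType R[i]) (ip : V -> V -> R[i]) (x : V) : R :=
  Num.sqrt (complex.Re (ip x x)).

Definition complete_ip (R : realType) (V : lmodType R[i]) (ip : V -> V -> R[i]) : Prop :=
  forall u : nat -> V,
    (forall e : R, 0 < e -> exists N : nat, forall m n : nat,
        (N <= m)%N -> (N <= n)%N -> hnorm ip (u m - u n) < e) ->
    exists l : V, forall e : R, 0 < e -> exists N : nat, forall n : nat,
        (N <= n)%N -> hnorm ip (u n - l) < e.

Definition hilbert_space (R : realType) (V : lmodType R[i]) (ip : V -> V -> R[i]) : Prop :=
  inner_product ip /\ complete_ip ip.

Definition separable (R : realType) (V : lmodType R[i]) (ip : V -> V -> R[i]) : Prop :=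
  exists D : nat -> V, forall (x : V) (e : R), 0 < e -> exists n : nat, hnorm ip (x - D n) < e.

Definition is_open (R : realType) (V : lmodType R[i]) (ip : V -> V -> R[i]) (U : V -> Prop) : Prop :=
  forall x : V, U x -> exists e : R, 0 < e /\ forall y : V, hnorm ip (x - y) < e -> U y.

Definition bounded_op (R : realType) (V : lmodType R[i]) (ip : V -> V -> R[i])
  (T : {linear V -> V}) : Prop :=
  exists M : R, forall x : V, hnorm ip (T x) <= M * hnorm ip (x).

Definition is_adjoint (R : realType) (V : lmodType R[i]) (ip : V -> V -> R[i])
  (T Tadj : V -> V) : Prop :=
  forall x y : V, ip (T x) y = ip x (Tadj y).

Definition hyponormal (R : realType) (V : lmodType R[i]) (ip : V -> V -> R[i])
  (T Tadj : V -> V) : Prop :=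
  forall h : V, hnorm ip (Tadj h) <= hnorm ip (T h).

Definition recurrent (R : realType) (V : lmodType R[i]) (ip : V -> V -> R[i])
  (T : V -> V) : Prop :=
  forall U : V -> Prop, is_open ip U -> (exists x, U x) ->
    exists k : nat, (0 < k)%N /\ exists x : V, U x /\ U (iter k T x).

Definition unitary (V : Type) (T Tadj : V -> V) : Prop :=
  (forall x : V, Tadj (T x) = x) /\ (forall x : V, T (Tadj x) = x).

From HB Require Import structures.
From mathcomp Require Import all_boot all_order all_algebra.
From mathcomp Require Import reals.
From mathcomp.real_closed Require Import complex.
From mathcomp Require Import ring lra.
Set Implicit Arguments. Unset Strict Implicit.
Import Order.TTheory GRing.Theory Num.Theory.
Local Open Scope ring_scope.
Local Open Scope complex_scope.

(** Hyponormality gives [||T z||^2 = <T* T z, z> <= ||T (T z)|| ||z||], so along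
    every orbit the norms [||T^j y||] form a log-convex sequence: the ratios
    [||T^(j+1) y|| / ||T^j y||] never decrease.  If [||T x|| <> ||x||], the ratio
    stays bounded away from [1] near [x], and log-convexity then keeps every
    orbit starting near [x] from returning near [x], contradicting recurrence;
    hence [T] is an isometry.  For an isometry, hyponormality forces [T* T = 1],
    so [h - T T* h] is orthogonal to the range of [T]; recurrence to its ball then
    forces it to vanish, i.e. [T T* = 1]. *)

Section RealPart.
Variable R : realType.
Implicit Types a b : R[i].

Lemma ReD a b : complex.Re (a + b) = complex.Re a + complex.Re b.
Proof. by case: a; case: b. Qed.

Lemma ReN a : complex.Re (- a) = - complex.Re a.
Proof. by case: a. Qed.

Lemma Re_conjc a : complex.Re (conjc a) = complex.Re a.
Proof. by case: a. Qed.

Lemma Re_realM (t : R) a : complex.Re (t%:C * a) = t * complex.Re a.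
Proof. by case: a => x y /=; ring. Qed.

Lemma ge0_real_complex a : 0 <= a -> a = (complex.Re a)%:C.
Proof. by case: a => x y; rewrite lecE /= => /andP[/eqP -> _]. Qed.
Lemma Re_ge0 a : 0 <= a -> 0 <= complex.Re a.
Proof. by case: a => x y; rewrite lecE /= => /andP[_ ->]. Qed.

End RealPart.

Section InnerProductSpace.
Variables (R : realType) (V : lmodType R[i]) (ip : V -> V -> R[i]).
Hypothesis ip_inner : inner_product ip.
Implicit Types x y z : V.

Lemma ipZDl a x y z : ip (a *: x + y) z = a * ip x z + ip y z.
Proof. by case: ip_inner. Qed.

Lemma ip_conjC x y : ip y x = conjc (ip x y).
Proof. by case: ip_inner. Qed.

Lemma ipDl x y z : ip (x + y) z = ip x z + ip y z.
Proof. by rewrite -[x]scale1r ipZDl mul1r scale1r. Qed.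

Lemma ip0l z : ip 0 z = 0.
Proof. by apply/eqP; rewrite -[X in X == _](addrK (ip 0 z)) -ipDl addr0 subrr. Qed.

Lemma ipZl a x z : ip (a *: x) z = a * ip x z.
Proof. by rewrite -[a *: x]addr0 ipZDl ip0l addr0. Qed.

Lemma ipNl x z : ip (- x) z = - ip x z.
Proof. by rewrite -scaleN1r ipZl mulN1r. Qed.

Lemma ipDr x y z : ip z (x + y) = ip z x + ip z y.
Proof. by rewrite ip_conjC ipDl rmorphD /= -!ip_conjC. Qed.

Lemma ipNr x z : ip z (- x) = - ip z x.
Proof. by rewrite ip_conjC ipNl rmorphN /= -ip_conjC. Qed.

Lemma ip0r z : ip z 0 = 0.
Proof. by rewrite ip_conjC ip0l rmorph0. Qed.

Lemma Re_ipC x y : complex.Re (ip y x) = complex.Re (ip x y).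
Proof. by rewrite ip_conjC Re_conjc. Qed.

Lemma Re_ipZl (t : R) x y : complex.Re (ip (t%:C *: x) y) = t * complex.Re (ip x y).
Proof. by rewrite ipZl Re_realM. Qed.

Lemma Re_ipZr (t : R) x y : complex.Re (ip x (t%:C *: y)) = t * complex.Re (ip x y).
Proof. by rewrite Re_ipC Re_ipZl Re_ipC. Qed.

Lemma hnorm_ge0 x : 0 <= hnorm ip x.
Proof. exact: sqrtr_ge0. Qed.

Lemma hnorm_sqr x : hnorm ip x ^+ 2 = complex.Re (ip x x).
Proof. by case: ip_inner => _ _ ip_ge0 _; rewrite sqr_sqrtr // Re_ge0. Qed.

Lemma hnorm_eq0 x : hnorm ip x = 0 -> x = 0.
Proof.
case: ip_inner => _ _ ip_ge0 ip_eq0 hx0; apply: ip_eq0.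
by rewrite (ge0_real_complex (ip_ge0 x)) -hnorm_sqr hx0 expr0n.
Qed.

Lemma hnorm0 : hnorm ip 0 = 0.
Proof. by rewrite /hnorm ip0l sqrtr0. Qed.

Lemma hnormD_sqr x y :
  hnorm ip (x + y) ^+ 2 = hnorm ip x ^+ 2 + hnorm ip y ^+ 2 + 2 * complex.Re (ip x y).
Proof. rewrite !hnorm_sqr ipDl !ipDr !ReD (Re_ipC x y); ring. Qed.

Lemma hnormB_sqr x y :
  hnorm ip (x - y) ^+ 2 = hnorm ip x ^+ 2 + hnorm ip y ^+ 2 - 2 * complex.Re (ip x y).
Proof. by rewrite hnormD_sqr !hnorm_sqr ipNl ipNr opprK ipNr ReN mulrN. Qed.

Lemma hnormZ_sqr (t : R) x : hnorm ip (t%:C *: x) ^+ 2 = t ^+ 2 * hnorm ip x ^+ 2.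
Proof. by rewrite !hnorm_sqr Re_ipZl Re_ipZr mulrA -expr2. Qed.

(* Expanding [0 <= ||b x - a y||^2] with [a = ||x||], [b = ||y||]. *)
Lemma Re_ip_le x y : complex.Re (ip x y) <= hnorm ip x * hnorm ip y.
Proof.
have [-> | x_neq0] := eqVneq x 0; first by rewrite ip0l hnorm0 mul0r.
have [-> | y_neq0] := eqVneq y 0; first by rewrite ip0r hnorm0 mulr0.
set a := hnorm ip x; set b := hnorm ip y; set r := complex.Re (ip x y).
have a_gt0 : 0 < a by rewrite lt0r hnorm_ge0 andbT; apply: contra x_neq0 => /eqP/hnorm_eq0->.
have b_gt0 : 0 < b by rewrite lt0r hnorm_ge0 andbT; apply: contra y_neq0 => /eqP/hnorm_eq0->.
have := sqr_ge0 (hnorm ip (b%:C *: x - a%:C *: y)).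
rewrite hnormB_sqr !hnormZ_sqr Re_ipZl Re_ipZr -/a -/b -/r => expansion_ge0.
have ab_gt0 : 0 < a * b by exact: mulr_gt0.
nra.
Qed.

Lemma hnormD x y : hnorm ip (x + y) <= hnorm ip x + hnorm ip y.
Proof.
rewrite -ler_sqr ?nnegrE ?addr_ge0 ?hnorm_ge0 // hnormD_sqr sqrrD.
by have := Re_ip_le x y; lra.
Qed.

Lemma hnormN x : hnorm ip (- x) = hnorm ip x.
Proof. by rewrite /hnorm ipNl ipNr opprK. Qed.

Lemma hnorm_close x z e : hnorm ip (x - z) <= e ->
  hnorm ip x - e <= hnorm ip z /\ hnorm ip z <= hnorm ip x + e.
Proof.
have := hnormD (x - z) z; have := hnormD (z - x) x.
rewrite !subrK -opprB hnormN; lra.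
Qed.

Lemma ball_open x e : is_open ip (fun y => hnorm ip (x - y) < e).
Proof.
move=> y xy_lt; exists (e - hnorm ip (x - y)); split; first lra.
by move=> z yz_lt; have := hnormD (x - y) (y - z); rewrite addrA subrK; lra.
Qed.

End InnerProductSpace.

Section LogConvexSequence.
Variables (R : realFieldType) (a : nat -> R).
Hypotheses (a_ge0 : forall j, 0 <= a j)
  (a_log_convex : forall j, a j.+1 ^+ 2 <= a j.+2 * a j).

Lemma log_convex_growth c : 1 <= c -> 0 < a 0 -> c * a 0 <= a 1 ->
  forall k, c * a 0 <= a k.+1.
Proof.
move=> c_ge1 a0_gt0 a1_ge.
have ratio_ge j : 0 < a j /\ c * a j <= a j.+1.
  elim: j => [|j [aj_gt0 ratio_j]]; first by [].
  have aj1_gt0 : 0 < a j.+1 by nra.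
  split=> //; rewrite -(ler_pM2r aj_gt0); have := a_log_convex j; nra.
elim=> [|k IHk] //; apply: le_trans IHk _.
by have [akS_gt0 ratio_k] := ratio_ge k.+1; nra.
Qed.

(* The ratio [a (j+1) / a j] is nondecreasing, so a small ratio at the end
   of an initial segment bounds all earlier ones. *)
Lemma log_convex_decay c : 0 <= c -> c <= 1 ->
  forall k, a k.+2 <= c * a k.+1 -> a k.+1 <= c * a 0.
Proof.
move=> c_ge0 c_le1 k last_ratio.
have ratio_up j : c * a j < a j.+1 -> c * a j.+1 < a j.+2.
  move=> ratio_j; have aj1_gt0 : 0 < a j.+1 by have := a_ge0 j; nra.
  rewrite ltNge; apply/negP => ratio_j1.
  have : a j.+2 * a j <= c * a j.+1 * a j by have := a_ge0 j; nra.
  have : c * a j * a j.+1 < a j.+1 ^+ 2 by nra.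
  have := a_log_convex j; lra.
have ratio_le j : (j <= k.+1)%N -> a j.+1 <= c * a j.
  move=> le_jk; rewrite leNgt; apply/negP => ratio_j.
  suff : c * a (j + (k.+1 - j)) < a (j + (k.+1 - j)).+1 by rewrite subnKC //; lra.
  by elim: (k.+1 - j)%N => [|d IHd]; rewrite ?addn0 // addnS; apply: ratio_up.
have : forall j, (j <= k)%N -> a j.+1 <= a 1.
  elim=> [|j IHj] le_jk //; apply: le_trans (IHj (ltnW le_jk)).
  by have := ratio_le j.+1 (leqW le_jk); have := a_ge0 j.+1; nra.
by move/(_ k (leqnn k))/le_trans; apply; apply: ratio_le.
Qed.

End LogConvexSequence.

Definition paranormal (R : realType) (V : lmodType R[i]) (ip : V -> V -> R[i])
    (T : V -> V) : Prop :=
  forall z, hnorm ip (T z) ^+ 2 <= hnorm ip (T (T z)) * hnorm ip z.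

Lemma hyponormal_paranormal (R : realType) (V : lmodType R[i]) (ip : V -> V -> R[i])
    (T Tadj : V -> V) :
  inner_product ip -> is_adjoint ip T Tadj -> hyponormal ip T Tadj -> paranormal ip T.
Proof.
move=> ip_inner T_adj T_hypo z; rewrite hnorm_sqr // T_adj.
apply: le_trans (Re_ip_le ip_inner _ _) _; rewrite mulrC.
by apply: ler_wpM2r; [exact: hnorm_ge0 | exact: T_hypo].
Qed.

Lemma bounded_op_ge0 (R : realType) (V : lmodType R[i]) (ip : V -> V -> R[i])
    (T : {linear V -> V}) :
  bounded_op ip T -> exists2 L, 0 <= L & forall z, hnorm ip (T z) <= L * hnorm ip z.
Proof.
move=> [M T_le]; exists `|M|; first exact: normr_ge0.
by move=> z; apply: le_trans (T_le z) _; rewrite ler_wpM2r ?hnorm_ge0 ?ler_norm.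
Qed.

Lemma recurrent_ball (R : realType) (V : lmodType R[i]) (ip : V -> V -> R[i])
    (T : V -> V) :
  inner_product ip -> recurrent ip T -> forall x e, 0 < e ->
  exists k, (0 < k)%N /\
    exists y, hnorm ip (x - y) < e /\ hnorm ip (x - iter k T y) < e.
Proof.
move=> ip_inner T_rec x e e_gt0; apply: T_rec; first exact: ball_open.
by exists x; rewrite subrr hnorm0.
Qed.

Section RecurrentParanormal.
Variables (R : realType) (V : lmodType R[i]) (ip : V -> V -> R[i]) (T : {linear V -> V}).
Hypotheses (ip_inner : inner_product ip) (T_bounded : bounded_op ip T)
  (T_paranormal : paranormal ip T) (T_recurrent : recurrent ip T).

Let orbit_log_convex y j :
  hnorm ip (iter j.+1 T y) ^+ 2 <= hnorm ip (iter j.+2 T y) * hnorm ip (iter j T y).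
Proof. by rewrite !iterS; apply: T_paranormal. Qed.

Let T_close x z e L : 0 <= L -> (forall z, hnorm ip (T z) <= L * hnorm ip z) ->
  hnorm ip (x - z) <= e ->
  hnorm ip (T x) - L * e <= hnorm ip (T z) /\ hnorm ip (T z) <= hnorm ip (T x) + L * e.
Proof.
move=> L_ge0 T_le xz_le; apply: hnorm_close => //; rewrite -linearB.
by apply: le_trans (T_le _) _; apply: ler_wpM2l.
Qed.

(* Near an expanded point the ratio [||T y|| / ||y||] stays above some [c > 1],
   so the norms along the orbit of [y] never come back down to [||x||]. *)
Lemma recurrent_paranormal_not_expanding x : hnorm ip (T x) <= hnorm ip x.
Proof.
rewrite leNgt; apply/negP => expanding.
have [L L_ge0 T_le] := bounded_op_ge0 T_bounded.
set a := hnorm ip x in expanding *; set b := hnorm ip (T x) in expanding *.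
have a_ge0 : 0 <= a := hnorm_ge0 ip x.
have a_gt0 : 0 < a.
  rewrite lt_neqAle a_ge0 andbT; apply/eqP => a0.
  move: expanding; rewrite /b (hnorm_eq0 ip_inner (esym a0)) linear0 hnorm0 //.
  by rewrite -a0 ltxx.
pose c := (a + b) / (2 * a).
have ca : c * a = (a + b) / 2 by rewrite /c; field; rewrite gt_eqF.
have c_ge1 : 1 <= c by rewrite -(ler_pM2r a_gt0) mul1r ca; lra.
pose e := (b - a) / (4 * (L + c + 1)).
have e_gt0 : 0 < e by rewrite divr_gt0 //; lra.
have eE : L * e + c * e + e = (b - a) / 4.
  by rewrite /e; field; apply/negP => /eqP; lra.
have [k [k_gt0 [y [xy_lt xky_lt]]]] := recurrent_ball ip_inner T_recurrent x e_gt0.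
have [y_ge y_le] := hnorm_close ip_inner (ltW xy_lt).
have [Ty_ge _] := T_close L_ge0 T_le (ltW xy_lt).
have [_ Tky_le] := hnorm_close ip_inner (ltW xky_lt).
rewrite -/a -/b in y_ge y_le Ty_ge Tky_le.
have Le_ge0 : 0 <= L * e by apply: mulr_ge0; lra.
have e_lt_a : e < a.
  rewrite ltNge; apply/negP => a_le_e.
  have : c * a <= c * e by apply: ler_wpM2l; lra.
  lra.
have cy_ge : c * a - c * e <= c * hnorm ip y by rewrite -mulrBr; apply: ler_wpM2l; lra.
have cy_le : c * hnorm ip y <= c * a + c * e by rewrite -mulrDr; apply: ler_wpM2l; lra.
have := log_convex_growth (orbit_log_convex y) c_ge1.
case: k k_gt0 xky_lt Tky_le => // k _ _ Tky_le.
move=> /(_ _ _ k) /=; lra.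
Qed.

(* Near a contracted point the ratio [||T z|| / ||z||] stays below some [c < 1];
   a return of the orbit of [y] near [x] would then force every earlier ratio
   below [c], so the orbit could not have come back to norm [||x||]. *)
Lemma recurrent_paranormal_not_contracting x : hnorm ip x <= hnorm ip (T x).
Proof.
rewrite leNgt; apply/negP => contracting.
have [L L_ge0 T_le] := bounded_op_ge0 T_bounded.
set a := hnorm ip x in contracting *; set b := hnorm ip (T x) in contracting *.
have a_gt0 : 0 < a by apply: le_lt_trans contracting; apply: hnorm_ge0.
pose c := (a + b) / (2 * a).
have ca : c * a = (a + b) / 2 by rewrite /c; field; rewrite gt_eqF.
have c_ge0 : 0 <= c by rewrite divr_ge0 ?addr_ge0 ?hnorm_ge0 // ltW ?mulr_gt0.
have c_le1 : c <= 1 by rewrite -(ler_pM2r a_gt0) mul1r ca; lra.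
pose e := (a - b) / (4 * (L + c + 1)).
have e_gt0 : 0 < e by rewrite divr_gt0 //; lra.
have eE : L * e + c * e + e = (a - b) / 4.
  by rewrite /e; field; apply/negP => /eqP; lra.
have Le_ge0 : 0 <= L * e by apply: mulr_ge0; lra.
have ratio_le z : hnorm ip (x - z) < e -> hnorm ip (T z) <= c * hnorm ip z.
  move=> xz_lt; have [z_ge _] := hnorm_close ip_inner (ltW xz_lt).
  have [_ Tz_le] := T_close L_ge0 T_le (ltW xz_lt).
  rewrite -/a -/b in z_ge Tz_le.
  have : c * a - c * e <= c * hnorm ip z by rewrite -mulrBr; apply: ler_wpM2l; lra.
  lra.
have [k [k_gt0 [y [xy_lt xky_lt]]]] := recurrent_ball ip_inner T_recurrent x e_gt0.
have [_ y_le] := hnorm_close ip_inner (ltW xy_lt).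
have [Tky_ge _] := hnorm_close ip_inner (ltW xky_lt).
rewrite -/a in y_le Tky_ge.
have cy_le : c * hnorm ip y <= c * a + c * e by rewrite -mulrDr; apply: ler_wpM2l; lra.
case: k k_gt0 xky_lt Tky_ge => // k _ xky_lt Tky_ge.
have := log_convex_decay (fun j => hnorm_ge0 ip (iter j T y)) (orbit_log_convex y)
  c_ge0 c_le1 (ratio_le _ xky_lt).
rewrite /=; lra.
Qed.

Lemma recurrent_paranormal_isometry x : hnorm ip (T x) = hnorm ip x.
Proof.
by apply/le_anti; rewrite recurrent_paranormal_not_expanding
  recurrent_paranormal_not_contracting.
Qed.

End RecurrentParanormal.

(* [||T* T x - x||^2 = ||T* T x||^2 - ||x||^2 <= ||T T x||^2 - ||T x||^2 = 0]. *)
Lemma hyponormal_isometry_adjK (R : realType) (V : lmodType R[i]) (ip : V -> V -> R[i])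
    (T Tadj : V -> V) :
  inner_product ip -> is_adjoint ip T Tadj -> hyponormal ip T Tadj ->
  (forall x, hnorm ip (T x) = hnorm ip x) -> forall x, Tadj (T x) = x.
Proof.
move=> ip_inner T_adj T_hypo T_iso x; apply/eqP; rewrite -subr_eq0; apply/eqP.
apply: (hnorm_eq0 ip_inner); apply/eqP; rewrite eq_le hnorm_ge0 andbT.
rewrite -(ler_sqr (R := R)) ?nnegrE ?hnorm_ge0 // expr0n /=.
rewrite hnormB_sqr // Re_ipC // -T_adj -hnorm_sqr // T_iso.
have := T_hypo (T x); rewrite !T_iso => Tadj_le.
have := hnorm_ge0 ip (Tadj (T x)); nra.
Qed.

(* A vector orthogonal to the range of [T] is at distance at least its own norm
   from every point of that range, so recurrence to its ball forces it to be [0]. *)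
Lemma recurrent_range_orthogonal_eq0 (R : realType) (V : lmodType R[i])
    (ip : V -> V -> R[i]) (T : V -> V) :
  inner_product ip -> recurrent ip T ->
  forall q, (forall z, complex.Re (ip q (T z)) = 0) -> q = 0.
Proof.
move=> ip_inner T_rec q q_orth; apply/eqP/negPn/negP => q_neq0.
have q_gt0 : 0 < hnorm ip q.
  by rewrite lt0r hnorm_ge0 andbT; apply: contra q_neq0 => /eqP/(hnorm_eq0 ip_inner)->.
have [[|k] [// _ [y [_ qky_lt]]]] := recurrent_ball ip_inner T_rec q q_gt0.
have : hnorm ip q ^+ 2 <= hnorm ip (q - iter k.+1 T y) ^+ 2.
  by rewrite iterS hnormB_sqr // q_orth; have := sqr_ge0 (hnorm ip (T (iter k T y))); lra.
rewrite ler_sqr ?nnegrE ?hnorm_ge0 //; lra.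
Qed.

Unset Implicit Arguments. Set Strict Implicit.

Theorem proposition8p3 (R : realType) (H : lmodType R[i]) (ip : H -> H -> R[i])
    (T : {linear H -> H}) (Tadj : H -> H) :
  hilbert_space ip -> separable ip ->
  bounded_op ip T -> is_adjoint ip T Tadj ->
  hyponormal ip T Tadj -> recurrent ip T ->
  unitary T Tadj.
Proof.
move=> [ip_inner _] _ T_bounded T_adj T_hypo T_rec.
have T_paranormal := hyponormal_paranormal ip_inner T_adj T_hypo.
have T_iso := recurrent_paranormal_isometry ip_inner T_bounded T_paranormal T_rec.
have adjK := hyponormal_isometry_adjK ip_inner T_adj T_hypo T_iso.
split=> // h; apply/eqP; rewrite eq_sym -subr_eq0; apply/eqP.
apply: (recurrent_range_orthogonal_eq0 ip_inner T_rec) => z.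
by rewrite Re_ipC // ipDr // ipNr // !T_adj adjK subrr.
Qed.
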